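(* With $n,\alpha,N,L,\ell$ as below: for $0\le k\le L-1$ and $1\le i\le N-L+1$, \[ \sum_{\substack{w\in W_k^>\\ p_1(w)=i}}q^{\mathrm{quinv}'(w)}=q^{\binom{\alpha_\ell}{2}+\cdots+\binom{\alpha_{n-1}}{2}+\binom{k+1}{2}+(i-1)L}\begin{bmatrix}N-L\\ \alpha_2,\dots,\alpha_{n-1}\end{bmatrix}\begin{bmatrix}N-i\\ k,\ N-L-i+1,\ L-k-1\end{bmatrix}, \] and for $1\le k\le L$ and $1\le j\le N-L+1$, \[ \sum_{\substack{w\in W_k^{\le}\\ p_n(w)=j}}q^{\mathrm{quinv}'(w)}=q^{\binom{\alpha_\ell}{2}+\cdots+\binom{\alpha_{n-1}}{2}+\binom{k}{2}+(j-1)L}\begin{bmatrix}N-L\\ \alpha_2,\dots,\alpha_{n-1}\end{bmatrix}\begin{bmatrix}N-j\\ k-1,\ N-L-j+1,\ L-k\end{bmatrix}. \]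
   Context: $n\ge3$, $\alpha=(\alpha_2,\dots,\alpha_{n-1})$ positive integers, $|\alpha|=\sum\alpha_i$, $N>|\alpha|$, $L=N-|\alpha|$, $2\le\ell\le n$. For $0\le k\le L$, $W_k$ is the set of words $w=(w_1,\dots,w_N)$ over $\{1,\dots,n\}$ with exactly $k$ letters $n$, exactly $L-k$ letters $1$, and exactly $\alpha_i$ letters $i$ for $2\le i\le n-1$. $\mathrm{coinv}(w)=\#\{(i,j):i<j,w_i<w_j\}$, and $\mathrm{quinv}'(w)=\mathrm{coinv}(w)+\binom{\alpha_\ell}{2}+\cdots+\binom{\alpha_{n-1}}{2}+\binom{k}{2}$ for $w\in W_k$ (empty middle sum if $\ell=n$). $p_n(w)$ is the position from the left of the leftmost $n$ in $w$; $p_1(w)$ is the position counted from the right of the rightmost $1$ in the word obtained from $w$ by deleting all $n$'s. $W_k^{\le}=\{w\in W_k:p_n(w)\le p_1(w)\}$, $W_k^>=\{w\in W_k:p_n(w)>p_1(w)\}$, with conventions $W_0=W_0^>$, $W_L=W_L^{\le}$. $q$-factorials $[m]!=\prod_{s=1}^m(1+q+\cdots+q^{s-1})$; $q$-multinomial $\begin{bmatrix}m\\ \beta_1,\dots,\beta_s\end{bmatrix}=\frac{[m]!}{[\beta_1]!\cdots[\beta_s]!}$ when all $\beta_i\ge0$ and $\sum\beta_i=m$, and $0$ if some $\beta_i<0$. *)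

From HB Require Import structures.
From mathcomp Require Import all_boot all_order all_algebra.
Set Implicit Arguments. Unset Strict Implicit. Unset Printing Implicit Defensive.
Import GRing.Theory.
Local Open Scope ring_scope.

(* Words are sequences of natural numbers (letters 1..n), positions 1-based. *)

Definition qint (s : nat) : {poly int} := \sum_(i < s) 'X^i.

Definition qfact (m : nat) : {poly int} := \prod_(1 <= s < m.+1) qint s.

(* The division is
   polynomial division; the divisor is monic so it is exact division. *)
Definition qmultinom (m : nat) (bs : seq nat) : {poly int} :=
  if (sumn bs == m)%N then qfact m %/ \prod_(b <- bs) qfact b else 0.

Definition coinv (w : seq nat) : nat :=
  (\sum_(i < size w) \sum_(j < size w | (i < j)%N)
     (nth 0 w i < nth 0 w j)%N)%N.

Definition inW (n : nat) (alpha : nat -> nat) (N L k : nat) (w : seq nat) : bool :=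
  [&& size w == N, all (fun x => (1 <= x <= n)%N) w,
      count_mem n w == k, count_mem 1%N w == (L - k)%N &
      all (fun i => count_mem i w == alpha i) (iota 2 (n - 2))].

Definition pn (n : nat) (w : seq nat) : nat := (index n w).+1.

Definition p1 (n : nat) (w : seq nat) : nat :=
  (index 1%N (rev (filter (fun x => x != n) w))).+1.

(* W_k^> and W_k^<= with conventions W_0 = W_0^>, W_L = W_L^<= *)
Definition Wgt (n : nat) (alpha : nat -> nat) (N L k : nat) (w : seq nat) : bool :=
  inW n alpha N L k w &&
  ((k == 0)%N || ((k != L) && (p1 n w < pn n w)%N)).
Definition Wle (n : nat) (alpha : nat -> nat) (N L k : nat) (w : seq nat) : bool :=
  inW n alpha N L k w &&
  ((k == L) || ((k != 0)%N && (pn n w <= p1 n w)%N)).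

Definition binsum (n l : nat) (alpha : nat -> nat) : nat :=
  (\sum_(l <= i < n) 'C(alpha i, 2))%N.

Definition quinv' (n l : nat) (alpha : nat -> nat) (k : nat) (w : seq nat) : nat :=
  (coinv w + binsum n l alpha + 'C(k, 2))%N.

(* all words of length N over {1,...,n}, enumerated via N-tuples over 'I_n *)
Definition word_of (n N : nat) (t : N.-tuple 'I_n) : seq nat :=
  map (fun x : 'I_n => (nat_of_ord x).+1) t.

Definition asum (n : nat) (alpha : nat -> nat) : nat := (\sum_(2 <= i < n) alpha i)%N.

Definition aseq (n : nat) (alpha : nat -> nat) : seq nat := map alpha (iota 2 (n - 2)).

(* Every word of W_k is a rearrangement of the fixed multiset
     letters n alpha k (L - k) = n^k 1^(L-k) 2^alpha_2 ... (n-1)^alpha_(n-1),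
   so a sum over N-tuples restricted to W_k is a sum over the distinct
   rearrangements of that multiset (MathComp's [permutations]).  Such a
   rearrangement w is determined by its n-mask (the 0/1 word marking the n's)
   together with the subword v of the other letters; v is in turn determined by
   its 1-mask (marking the letters different from 1) and the subword u of the
   letters 2..n-1.  Since n is the largest and 1 the smallest letter, coinv is
   additive along this decomposition, p_n only depends on the n-mask and p_1
   only on the 1-mask.  Hence each sum factorizes as a product of
   - the sum of q^coinv over rearrangements of 2^alpha_2 ... (n-1)^alpha_(n-1),
     which is the q-multinomial coefficient (q-multinomial theorem), and
   - two sums over binary words with a constraint on the position of the
     first 1 or of the last 0; the constraint fixes a prefix or a suffix, and
     what remains is a q-binomial coefficient times a power of q.
   The q-trinomial of the statement is finally a product of two q-binomials. *)

From HB Require Import structures.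
From mathcomp Require Import all_boot all_order all_algebra.
From mathcomp Require Import zify ring.
Import GRing.Theory.
Local Open Scope ring_scope.

Fixpoint coinv_rec (s : seq nat) : nat :=
  if s is x :: s' then (count (fun y => x < y) s' + coinv_rec s')%N else 0%N.

Lemma sum_nth_gt (x : nat) (s : seq nat) :
  (\sum_(j < size s) (x < nth 0 s j)%N)%N = count (fun y => x < y)%N s.
Proof.
elim: s => [|y s IH]; first by rewrite big_ord0.
by rewrite /= big_ord_recl /= IH.
Qed.

Lemma coinvE (w : seq nat) : coinv w = coinv_rec w.
Proof.
rewrite /coinv; elim: w => [|x w IH]; first by rewrite big_ord0.
rewrite /= big_ord_recl /= -IH; congr (_ + _)%N.
  rewrite big_mkcond big_ord_recl /= add0n -sum_nth_gt.
  by apply: eq_bigr => j _.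
apply: eq_bigr => i _.
rewrite big_mkcond big_ord_recl /= add0n [in RHS]big_mkcond.
by apply: eq_bigr => j _.
Qed.

Lemma coinv_rec_cat (s t : seq nat) :
  coinv_rec (s ++ t) =
  (coinv_rec s + coinv_rec t + sumn (map (fun x => count (fun y => x < y)%N t) s))%N.
Proof.
elim: s => [|x s IH] /=; first by rewrite add0n addn0.
rewrite IH count_cat; lia.
Qed.

Lemma coinv_rec_nseq (r x : nat) : coinv_rec (nseq r x) = 0%N.
Proof. by elim: r => //= r ->; rewrite count_nseq /= ltnn. Qed.

Section RearrangementSums.
Variable R : nmodType.

Lemma sum_perms_nil (F : seq nat -> R) :
  \sum_(w <- permutations [::]) F w = F [::].
Proof. by rewrite /permutations /= big_cons big_nil addr0. Qed.

Lemma sum_perms_first (s : seq nat) (F : seq nat -> R) : (0 < size s)%N ->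
  \sum_(w <- permutations s) F w =
  \sum_(x <- undup s) \sum_(t <- permutations (rem x s)) F (x :: t).
Proof.
by move=> hs; rewrite (perm_big _ (permutationsE hs)) /= big_allpairs_dep.
Qed.

Lemma sum_perms_eq (s s' : seq nat) (F : seq nat -> R) : perm_eq s s' ->
  \sum_(w <- permutations s) F w = \sum_(w <- permutations s') F w.
Proof. by move=> h; apply/perm_big/perm_permutations. Qed.

Lemma sum_undup_split (a : nat) (s : seq nat) (H : nat -> R) :
  \sum_(x <- undup s) H x =
  (if a \in s then H a else 0) + \sum_(x <- undup (filter (fun y => y != a) s)) H x.
Proof.
case: ifP => ha.
  rewrite (bigD1_seq a) ?mem_undup ?undup_uniq //=.
  by rewrite -big_filter filter_undup.
rewrite add0r; congr (\sum_(x <- undup _) _).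
by apply/esym/all_filterP/allP => y ys; apply: contraNneq (negbT ha) => <-.
Qed.

Lemma sum_perms_bij (g : seq nat -> seq nat) (P : pred (seq nat))
    (s s' : seq nat) (F : seq nat -> R) :
  injective g ->
  (forall m, perm_eq m s' -> perm_eq (g m) s && P (g m)) ->
  (forall m, perm_eq m s -> P m -> exists2 m', perm_eq m' s' & m = g m') ->
  \sum_(m <- permutations s | P m) F m = \sum_(m <- permutations s') F (g m).
Proof.
move=> ginj h1 h2; rewrite -big_filter -[RHS](big_map g xpredT F).
apply: perm_big; apply: uniq_perm.
- by rewrite filter_uniq // permutations_uniq.
- by rewrite (map_inj_uniq ginj) permutations_uniq.
move=> m; rewrite mem_filter mem_permutations.
apply/andP/mapP => [[pm ms]|[m' m's ->]].
  by have [m' hm' ->] := h2 m ms pm; exists m'; rewrite // mem_permutations.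
by move: m's; rewrite mem_permutations => /h1 /andP[-> ->].
Qed.

End RearrangementSums.

(* [mark a b0 b1] sends the letter a to b1 and every other letter to b0; the
   image of a word is its a-mask. *)
Definition mark (a b0 b1 y : nat) : nat := if y == a then b1 else b0.

Lemma filter_rem_same (a : nat) (s : seq nat) :
  filter (fun y => y != a) (rem a s) = filter (fun y => y != a) s.
Proof.
elim: s => //= y s IH; case: (eqVneq y a) => [->|ya] /=; first by rewrite ?eqxx.
by rewrite ya /= IH.
Qed.

Lemma filter_rem_other (a x : nat) (s : seq nat) : x != a ->
  filter (fun y => y != a) (rem x s) = rem x (filter (fun y => y != a) s).
Proof.
move=> xa; elim: s => //= y s IH; case: (eqVneq y x) => [->|yx] /=.
  by rewrite xa /= eqxx.
by case: (y != a); rewrite /= ?(negbTE yx) IH.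
Qed.

Lemma undup_nseq (m x : nat) : undup (nseq m.+1 x) = [:: x].
Proof.
elim: m => //= m IH; rewrite inE eqxx /=.
by move: IH => /=; case: m => [|m] /=; rewrite ?inE ?eqxx.
Qed.

Section SplitAlongLetter.
Variables a b0 b1 : nat.
Hypothesis b01 : b0 != b1.
Local Notation mk := (mark a b0 b1).
Local Notation other := (fun y => y != a).

Lemma mark_eq_b1 (y : nat) : (mk y == b1) = (y == a).
Proof.
rewrite /mark; case: (eqVneq y a) => [_|ya]; rewrite ?eqxx //.
exact: negbTE b01.
Qed.

Lemma mem_mark_b1 (s : seq nat) : (b1 \in map mk s) = (a \in s).
Proof.
apply/mapP/idP => [[y ys /eqP]|ha]; last by exists a; rewrite // /mark eqxx.
by rewrite eq_sym mark_eq_b1 => /eqP <-.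
Qed.

Lemma mark_rem_a (s : seq nat) : map mk (rem a s) = rem b1 (map mk s).
Proof.
elim: s => //= y s IH; rewrite mark_eq_b1.
by case: (eqVneq y a) => //= _; rewrite IH.
Qed.

Lemma filter_mark_b1 (s : seq nat) :
  filter (fun y => y != b1) (map mk s) = nseq (size (filter other s)) b0.
Proof.
elim: s => //= y s ->; rewrite mark_eq_b1 /mark.
by case: (eqVneq y a).
Qed.

Lemma perm_mark_rem (x : nat) (s : seq nat) : x \in s -> x != a ->
  perm_eq (map mk (rem x s)) (rem b0 (map mk s)).
Proof.
move=> xs xa.
have mux : mk x = b0 by rewrite /mark (negbTE xa).
have h : perm_eq (map mk s) (b0 :: map mk (rem x s)).
  by have := perm_map mk (perm_to_rem xs); rewrite map_cons mux.
have b0m : b0 \in map mk s by rewrite (perm_mem h) inE eqxx.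
by rewrite -(perm_cons b0) -(permPl h) perm_to_rem.
Qed.

Variable R : nmodType.

(* The decomposition w <-> (a-mask of w, subword of w without a) is a
   bijection between the rearrangements of s and pairs of rearrangements. *)
Lemma sum_perms_split (s : seq nat) (F : seq nat -> seq nat -> R) :
  \sum_(w <- permutations s) F (map mk w) (filter other w) =
  \sum_(m <- permutations (map mk s))
    \sum_(v <- permutations (filter other s)) F m v.
Proof.
have [k] := ubnP (size s); elim: k s F => // k IH s F hs.
have [/size0nil -> | s0] := posnP (size s); first by rewrite /= !sum_perms_nil.
have sz x : x \in s -> (size (rem x s) < k)%N.
  by move=> xs; rewrite size_rem // -ltnS prednK.
rewrite sum_perms_first // (sum_undup_split _ a).
rewrite (@sum_perms_first _ (map mk s)) ?size_map // [RHS](sum_undup_split _ b1).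
rewrite filter_mark_b1 mem_mark_b1; congr (_ + _).
  case: ifP => // ha.
  have mua : mk a = b1 by rewrite /mark eqxx.
  under eq_bigr => t _ do rewrite map_cons /= eqxx mua.
  rewrite (IH (rem a s) (fun m v => F (b1 :: m) v)) ?sz //.
  by rewrite mark_rem_a filter_rem_same.
case fsE : (filter other s) => [|x0 fs0]; first by rewrite !big_nil.
rewrite [size _]/= undup_nseq big_cons big_nil addr0.
under [RHS]eq_bigr => m' _ do rewrite (@sum_perms_first _ (x0 :: fs0)) //.
rewrite exchange_big -fsE; apply: eq_big_seq => x.
rewrite mem_undup mem_filter => /andP[xa xs].
have mux : mk x = b0 by rewrite /mark (negbTE xa).
under [LHS]eq_bigr => t _ do rewrite map_cons /= xa mux.
rewrite (IH (rem x s) (fun m v => F (b0 :: m) (x :: v))) ?sz //.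
by rewrite filter_rem_other //; apply/sum_perms_eq/perm_mark_rem.
Qed.

End SplitAlongLetter.

(* If the letter a lies on the same side (below or above) of all the other
   letters, as b0 does with respect to b1, then coinv splits into the coinv of
   the a-mask and the coinv of the subword of the other letters. *)
Lemma coinv_rec_split (a b0 b1 : nat) (w : seq nat) : b0 != b1 ->
  (forall y, y \in w -> y != a -> (y < a)%N = (b0 < b1)%N) ->
  coinv_rec w = (coinv_rec (map (mark a b0 b1) w) +
                 coinv_rec (filter (fun y => y != a) w))%N.
Proof.
move=> b01; set mk := mark a b0 b1.
have pair x y : (x != a -> (x < a)%N = (b0 < b1)%N) ->
    (y != a -> (y < a)%N = (b0 < b1)%N) ->
    nat_of_bool (x < y)%N = (nat_of_bool (mk x < mk y)%N +
                             nat_of_bool ((x != a) && (y != a) && (x < y)%N))%N.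
  move=> hx hy; rewrite /mk /mark.
  case: (eqVneq x a) => [->|xa]; case: (eqVneq y a) => [->|ya] /=.
  - by rewrite !ltnn.
  - move: (hy ya); rewrite ltnNge leq_eqVlt eq_sym (negbTE ya) /= => /negbRL ->.
    by rewrite addn0; move: b01; case: ltngtP.
  - by rewrite (hx xa) addn0.
  - by rewrite ltnn.
elim: w => [|x w IH] hw //=.
have hw' y : y \in w -> y != a -> (y < a)%N = (b0 < b1)%N.
  by move=> yw; apply: hw; rewrite inE yw orbT.
have hx : x != a -> (x < a)%N = (b0 < b1)%N by apply: hw; rewrite inE eqxx.
rewrite IH //.
have cnt : count (fun y => x < y)%N w =
   (count (fun y => mk x < y)%N (map mk w) +
    (if x != a then count (fun y => x < y)%N (filter (fun y => y != a) w) else 0))%N.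
  elim: w hw' {IH hw} => [|y w IHw] hw' /=; first by case: (x != a).
  rewrite IHw; last by move=> z zw; apply: hw'; rewrite inE zw orbT.
  rewrite (pair x y hx (hw' y (mem_head y w))).
  case: (eqVneq x a) => [->|xa] /=; rewrite ?addn0 //.
  by case: (eqVneq y a) => [->|ya] /=; rewrite ?addn0; lia.
rewrite cnt; case: (x != a) => /=; lia.
Qed.

Lemma qint0 : qint 0 = 0. Proof. by rewrite /qint big_ord0. Qed.

Lemma qintD (a b : nat) : qint (a + b) = qint a + 'X^a * qint b.
Proof.
rewrite /qint big_split_ord /=; congr (_ + _).
by rewrite mulr_sumr; apply: eq_bigr => i _; rewrite -exprD.
Qed.

Lemma qfact0 : qfact 0 = 1. Proof. by rewrite /qfact big_nil. Qed.

Lemma qfactS (c : nat) : qfact c.+1 = qfact c * qint c.+1.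
Proof. by rewrite /qfact big_nat_recr. Qed.

Lemma count_gt_split (x B : nat) (s : seq nat) : (x < B)%N ->
  all (fun y => y < B.+1)%N s ->
  count (fun y => x < y)%N s =
  (count_mem B s + count (fun y => x < y)%N (filter (fun y => y < B)%N s))%N.
Proof.
move=> xB; elim: s => //= y s IH /andP[yB hs]; rewrite IH //.
case: (ltnP y B) => h /=; first by rewrite (ltn_eqF h); lia.
have -> : y = B by lia.
by rewrite eqxx xB; lia.
Qed.

Lemma qint_telescope (B : nat) (s : seq nat) : all (fun x => x < B)%N s ->
  \sum_(x < B) 'X^(count (fun y => x < y)%N s) * qint (count_mem (x : nat) s)
  = qint (size s).
Proof.
elim: B s => [|B IH] s hs.
  by case: s hs => [|y s] //=; rewrite big_ord0 qint0.
rewrite big_ord_recr /=.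
set s' := filter (fun y => y < B)%N s.
have hs' : all (fun x => x < B)%N s' by apply/allP => y; rewrite mem_filter => /andP[].
have cB : count (fun y => B < y)%N s = 0%N.
  apply/eqP; rewrite -leqn0 leqNgt -has_count; apply/hasPn => y ys.
  by move/allP: hs => /(_ y ys); rewrite -leqNgt.
have sz : size s = (size s' + count_mem B s)%N.
  rewrite /s' size_filter -[LHS](count_predC (fun y => y < B)%N).
  congr (_ + _)%N; apply: eq_in_count => y ys /=.
  by move/allP: hs => /(_ y ys) h; apply/idP/eqP; lia.
have e (x : 'I_B) :
    'X^(count (fun y => x < y)%N s) * qint (count_mem (x : nat) s) =
    'X^(count_mem B s) * ('X^(count (fun y => x < y)%N s') * qint (count_mem (x : nat) s')).
  rewrite mulrA -exprD; congr ('X^_ * qint _); first exact: count_gt_split.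
  rewrite /s' count_filter; apply: eq_count => y /=.
  by case: (eqVneq y x) => [->|] //=; rewrite ltn_ord.
under eq_bigr => x _ do rewrite e.
by rewrite -mulr_sumr IH // cB expr0 mul1r sz addnC qintD addrC.
Qed.

Lemma sum_undup_ord (R : nmodType) (B : nat) (s : seq nat) (H : nat -> R) :
  all (fun x => x < B)%N s ->
  \sum_(x <- undup s) H x = \sum_(x < B | (x : nat) \in s) H x.
Proof.
move=> hs; rewrite -big_mkord /index_iota subn0 -big_filter.
apply: perm_big; apply: uniq_perm; rewrite ?undup_uniq ?filter_uniq ?iota_uniq //.
move=> x; rewrite mem_undup mem_filter mem_iota leq0n add0n.
case xs: (x \in s); last by apply/esym; apply: contraNF (negbT xs) => /andP[].
by move: (allP hs x xs) => /= ->; rewrite andbT; exact: (esym xs).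
Qed.

Lemma prod_qfact_rem (B x : nat) (s : seq nat) : x \in s -> (x < B)%N ->
  \prod_(y < B) qfact (count_mem (y : nat) s) =
  qint (count_mem x s) * \prod_(y < B) qfact (count_mem (y : nat) (rem x s)).
Proof.
move=> xs xB; have cnt y := permP (perm_to_rem xs) (pred1 y).
rewrite (bigD1 (Ordinal xB)) //= [in RHS](bigD1 (Ordinal xB)) //=.
rewrite cnt /= eqxx add1n qfactS mulrCA mulrA; congr (_ * _ * _).
apply: eq_bigr => y hy; rewrite cnt /=.
suff -> : (x == y) = false by [].
by apply/negbTE; apply: contra hy => /eqP e; apply/eqP/val_inj; rewrite /= e.
Qed.

Lemma qmultinomial_coinv (B : nat) (s : seq nat) : all (fun x => x < B)%N s ->
  (\sum_(w <- permutations s) 'X^(coinv_rec w)) *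
    \prod_(y < B) qfact (count_mem (y : nat) s)
  = qfact (size s).
Proof.
have [k] := ubnP (size s); elim: k s => // k IH s hs hB.
have [/size0nil -> | s0] := posnP (size s).
  by rewrite sum_perms_nil /= expr0 mul1r qfact0 big1 // => y _; rewrite qfact0.
rewrite sum_perms_first // mulr_suml.
rewrite (eq_big_seq (fun x => 'X^(count (fun y => x < y)%N s) *
                              qint (count_mem x s) * qfact (size s).-1)); last first.
  move=> x; rewrite mem_undup => xs.
  have xB : (x < B)%N by move/allP: hB => /(_ x xs).
  rewrite (@prod_qfact_rem B x s xs xB) -mulrA.
  rewrite (eq_big_seq (fun t => 'X^(count (fun y => x < y)%N s) * 'X^(coinv_rec t))).
    have hr : all (fun x => x < B)%N (rem x s).
      by apply/allP => y /mem_rem yr; move/allP: hB => /(_ y yr).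
    have sz : (size (rem x s) < k)%N by rewrite size_rem // -ltnS prednK.
    have IHx := IH (rem x s) sz hr; rewrite size_rem // in IHx.
    by rewrite -mulr_sumr -IHx; ring.
  move=> t; rewrite mem_permutations => ht /=.
  by rewrite exprD (permP ht) (permP (perm_to_rem xs)) /= ltnn.
rewrite -mulr_suml (@sum_undup_ord _ B s _ hB) big_mkcond /=.
rewrite (eq_bigr (fun x : 'I_B => 'X^(count (fun y => x < y)%N s) *
                                  qint (count_mem (x : nat) s))); last first.
  by move=> x _; case: ifP => // /negbT xs; rewrite (count_memPn xs) qint0 mulr0.
by rewrite qint_telescope // -[in qfact (size s)](prednK s0) qfactS prednK // mulrC.
Qed.

(* Binary words: [binword a b] has b zeros followed by a ones, and [binGF a b]
   is the q-binomial generating function of coinv over its rearrangements. *)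
Definition binword (a b : nat) : seq nat := nseq b 0%N ++ nseq a 1%N.

Definition binGF (a b : nat) : {poly int} :=
  \sum_(m <- permutations (binword a b)) 'X^(coinv_rec m).

Lemma perm_binword (m : seq nat) (a b : nat) : perm_eq m (binword a b) =
  [&& all (fun z => z <= 1)%N m, count_mem 1%N m == a & count_mem 0%N m == b].
Proof.
apply/idP/idP.
  move=> pm; rewrite (perm_all _ pm) !(permP pm) /binword all_cat !count_cat.
  rewrite !count_nseq !all_nseq /= !orbT /=; apply/andP; split; apply/eqP; lia.
case/and3P => ha /eqP h1 /eqP h0; apply/allP => x _ /=; apply/eqP.
rewrite /binword count_cat !count_nseq /=.
case: (eqVneq x 0%N) => [->|x0] /=; first by rewrite h0; lia.
case: (eqVneq x 1%N) => [->|x1] /=; first by rewrite h1; lia.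
rewrite !mul0n addn0; apply/count_memPn/negP => xm.
by move/allP: ha => /(_ x xm); lia.
Qed.

Lemma binary_letters (m : seq nat) : all (fun z => z <= 1)%N m ->
  all (fun z => (z == 0%N) || (z == 1%N)) m /\
  all (fun z => (z == 1%N) || (z == 0%N)) m.
Proof. by move=> h; split; apply/allP => z /(allP h) /= hz; apply/orP; lia. Qed.

Lemma word2_first (x y r : nat) (m : seq nat) :
  all (fun z => (z == x) || (z == y)) m -> x != y -> index y m = r ->
  (r < size m)%N -> m = nseq r x ++ y :: drop r.+1 m.
Proof.
elim: m r => [|z m IH] r //= /andP[hz hm] xy.
case: (eqVneq z y) => [->|zy] /=; first by move=> <- _; rewrite drop0.
move=> <- hs /=; rewrite (negbTE zy) orbF in hz; rewrite (eqP hz).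
by congr (_ :: _); apply: IH.
Qed.

Lemma word2_prefix (x y r : nat) (m : seq nat) :
  all (fun z => (z == x) || (z == y)) m -> (r <= index y m)%N ->
  m = nseq r x ++ drop r m.
Proof.
elim: m r => [|z m IH] r /=; first by move=> _; rewrite leqn0 => /eqP ->.
move=> /andP[hz hm]; case: r => [|r] //=.
case: (eqVneq z y) => [->|zy] //=; rewrite ltnS => hr.
rewrite (negbTE zy) orbF in hz; rewrite (eqP hz); congr (_ :: _); exact: IH.
Qed.

Lemma catl_inj (p : seq nat) : injective (cat p).
Proof. by elim: p => //= z p IH x y [] /IH. Qed.

Lemma catr_inj (t : seq nat) : injective (fun x : seq nat => x ++ t).
Proof.
move=> x y /(congr1 rev); rewrite !rev_cat => /catl_inj /(congr1 rev).
by rewrite !revK.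
Qed.

Lemma count_gt1_binary (m : seq nat) : all (fun z => z <= 1)%N m ->
  count (fun y => 1 < y)%N m = 0%N.
Proof. by elim: m => //= z m IH /andP[hz /IH ->]; rewrite ltnNge hz. Qed.

Lemma count_gt0_binary (m : seq nat) : all (fun z => z <= 1)%N m ->
  count (fun y => 0 < y)%N m = count_mem 1%N m.
Proof.
elim: m => //= z m IH /andP[hz /IH ->]; congr (_ + _)%N.
by case: z hz => [|[|z]].
Qed.

Lemma cross_coinv_binary (m t : seq nat) : all (fun z => z <= 1)%N m ->
  sumn (map (fun x => count (fun y => x < y)%N t) m) =
  (count_mem 0%N m * count (fun y => 0 < y)%N t +
   count_mem 1%N m * count (fun y => 1 < y)%N t)%N.
Proof.
elim: m => //= z m IH /andP[hz /IH ->].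
by case: z hz => [|[|z]] //= _; lia.
Qed.

Lemma index_nseq_cat (x y r : nat) (t : seq nat) : x != y ->
  index y (nseq r x ++ t) = (r + index y t)%N.
Proof. by move=> xy; elim: r => //= r ->; rewrite (negbTE xy). Qed.

(* First 1 at position r: the prefix 0^r 1 is fixed and contributes q^(rK). *)
Lemma binGF_first1_eq (K P r : nat) : (0 < K)%N -> (r <= P)%N ->
  \sum_(m <- permutations (binword K P) | index 1%N m == r) 'X^(coinv_rec m) =
  'X^(r * K) * binGF K.-1 (P - r).
Proof.
move=> K0 rP.
rewrite (@sum_perms_bij _ (fun m' => nseq r 0%N ++ 1%N :: m')
   (fun m => index 1%N m == r) (binword K P) (binword K.-1 (P - r))).
- rewrite /binGF mulr_sumr; apply: eq_big_seq => m'.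
  rewrite mem_permutations perm_binword => /and3P[ha /eqP h1 _].
  rewrite -exprD coinv_rec_cat coinv_rec_nseq /= (count_gt1_binary _ ha).
  rewrite map_nseq sumn_nseq /= (count_gt0_binary _ ha) h1 add1n prednK //.
  congr ('X^_); lia.
- by move=> x y /catl_inj [].
- move=> m'; rewrite !perm_binword => /and3P[ha /eqP h1 /eqP h0].
  rewrite all_cat all_nseq /= ha !count_cat /= !count_nseq /= h1 h0.
  rewrite index_nseq_cat //= addn0 eqxx andbT orbT /= add1n prednK //.
  by apply/andP; split; apply/eqP; lia.
move=> m; rewrite perm_binword => /and3P[ha /eqP h1 /eqP h0] /eqP hi.
have [a01 _] := binary_letters _ ha.
have hr : (r < size m)%N by rewrite -hi index_mem -has_pred1 has_count h1.
have hm := @word2_first 0 1 r m a01 isT hi hr.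
exists (drop r.+1 m) => //.
set d := drop r.+1 m in hm *.
move: ha h1 h0; rewrite hm all_cat /= count_cat /= count_cat /= !count_nseq /=.
move=> /andP[_ ha] h1 h0.
rewrite perm_binword ha /=; apply/andP; split; apply/eqP; lia.
Qed.

(* First 1 at position >= i: the prefix 0^i is fixed. *)
Lemma binGF_first1_ge (K P i : nat) : (i <= P)%N ->
  \sum_(m <- permutations (binword K P) | (i <= index 1%N m)%N) 'X^(coinv_rec m) =
  'X^(i * K) * binGF K (P - i).
Proof.
move=> iP.
rewrite (@sum_perms_bij _ (fun m' => nseq i 0%N ++ m')
   (fun m => (i <= index 1%N m)%N) (binword K P) (binword K (P - i))).
- rewrite /binGF mulr_sumr; apply: eq_big_seq => m'.
  rewrite mem_permutations perm_binword => /and3P[ha /eqP h1 _].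
  rewrite -exprD coinv_rec_cat coinv_rec_nseq /= map_nseq sumn_nseq.
  rewrite (count_gt0_binary _ ha) h1; congr ('X^_); lia.
- exact: catl_inj.
- move=> m'; rewrite !perm_binword => /and3P[ha /eqP h1 /eqP h0].
  rewrite all_cat all_nseq /= ha !count_cat /= !count_nseq /= h1 h0.
  rewrite index_nseq_cat //= leq_addr andbT orbT /=.
  by apply/andP; split; apply/eqP; lia.
move=> m; rewrite perm_binword => /and3P[ha /eqP h1 /eqP h0] hi.
have [a01 _] := binary_letters _ ha.
have hm := @word2_prefix 0 1 i m a01 hi.
exists (drop i m) => //.
set d := drop i m in hm *.
move: ha h1 h0; rewrite hm all_cat /= !count_cat /= !count_nseq /=.
move=> /andP[_ ha] h1 h0.
rewrite perm_binword ha /=; apply/andP; split; apply/eqP; lia.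
Qed.

(* Last 0 at position >= r from the right: the suffix 1^r is fixed. *)
Lemma binGF_last0_ge (M A r : nat) : (r <= M)%N ->
  \sum_(m <- permutations (binword M A) | (r <= index 0%N (rev m))%N)
     'X^(coinv_rec m) =
  'X^(r * A) * binGF (M - r) A.
Proof.
move=> rM.
rewrite (@sum_perms_bij _ (fun m' => m' ++ nseq r 1%N)
   (fun m => (r <= index 0%N (rev m))%N) (binword M A) (binword (M - r) A)).
- rewrite /binGF mulr_sumr; apply: eq_big_seq => m'.
  rewrite mem_permutations perm_binword => /and3P[ha _ /eqP h0].
  rewrite -exprD coinv_rec_cat coinv_rec_nseq (cross_coinv_binary _ _ ha).
  rewrite !count_nseq /= h0; congr ('X^_); lia.
- exact: catr_inj.
- move=> m'; rewrite !perm_binword => /and3P[ha /eqP h1 /eqP h0].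
  rewrite all_cat all_nseq /= ha !count_cat /= !count_nseq /= h1 h0.
  rewrite rev_cat rev_nseq index_nseq_cat //= leq_addr andbT orbT /=.
  by apply/andP; split; apply/eqP; lia.
move=> m; rewrite perm_binword => /and3P[ha /eqP h1 /eqP h0] hi.
have [_ a10] := binary_letters _ ha.
have a10' : all (fun z => (z == 1%N) || (z == 0%N)) (rev m) by rewrite all_rev.
have hm := @word2_prefix 1 0 r (rev m) a10' hi.
set d := drop r (rev m) in hm *.
have mE : m = rev d ++ nseq r 1%N by rewrite -[m]revK hm rev_cat rev_nseq.
exists (rev d) => //.
move: ha h1 h0; rewrite mE all_cat /= !count_cat /= !count_nseq /=.
move=> /andP[ha _] h1 h0.
rewrite perm_binword ha /=; apply/andP; split; apply/eqP; lia.
Qed.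

(* Last 0 at position r from the right: the suffix 0 1^r is fixed. *)
Lemma binGF_last0_eq (M A r : nat) : (r <= M)%N -> (0 < A)%N ->
  \sum_(m <- permutations (binword M A) | index 0%N (rev m) == r)
     'X^(coinv_rec m) =
  'X^(r * A) * binGF (M - r) A.-1.
Proof.
move=> rM A0.
rewrite (@sum_perms_bij _ (fun m' => m' ++ 0%N :: nseq r 1%N)
   (fun m => index 0%N (rev m) == r) (binword M A) (binword (M - r) A.-1)).
- rewrite /binGF mulr_sumr; apply: eq_big_seq => m'.
  rewrite mem_permutations perm_binword => /and3P[ha _ /eqP h0].
  rewrite -exprD coinv_rec_cat /= coinv_rec_nseq (cross_coinv_binary _ _ ha) /=.
  rewrite !count_nseq /= h0; congr ('X^_); rewrite -[in RHS](prednK A0); lia.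
- exact: catr_inj.
- move=> m'; rewrite !perm_binword => /and3P[ha /eqP h1 /eqP h0].
  rewrite all_cat /= all_nseq /= ha !count_cat /= !count_nseq /= h1 h0.
  rewrite rev_cat rev_cons rev_nseq cat_rcons index_nseq_cat //= addn0 eqxx.
  by rewrite andbT orbT /= !mul1n !mul0n !add0n !addn0 subnK // addn1 prednK // !eqxx.
move=> m; rewrite perm_binword => /and3P[ha /eqP h1 /eqP h0] /eqP hi.
have [_ a10] := binary_letters _ ha.
have a10' : all (fun z => (z == 1%N) || (z == 0%N)) (rev m) by rewrite all_rev.
have hr : (r < size (rev m))%N.
  by rewrite -hi index_mem mem_rev -has_pred1 has_count h0.
have hm := @word2_first 1 0 r (rev m) a10' isT hi hr.
set d := drop r.+1 (rev m) in hm *.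
have mE : m = rev d ++ 0%N :: nseq r 1%N.
  by rewrite -[m]revK hm rev_cat rev_cons rev_nseq cat_rcons.
exists (rev d) => //.
move: ha h1 h0; rewrite mE all_cat /= !count_cat /= !count_nseq /=.
move=> /andP[ha _] h1 h0.
rewrite perm_binword ha /=; apply/andP; split; apply/eqP; lia.
Qed.

(* [s] is monic of degree s - 1 (the size is tracked for the induction). *)
Lemma qint_monic (s : nat) : (0 < s)%N -> (qint s \is monic) && (size (qint s) == s).
Proof.
case: s => // s _; elim: s => [|s IH].
  by rewrite /qint big_ord1 expr0 monic1 size_poly1.
move/andP: IH => [m1 /eqP sz].
rewrite /qint big_ord_recr /= -/(qint s.+1).
have hs : (size (qint s.+1) < size ('X^(s.+1) : {poly int}))%N.
  by rewrite size_polyXn sz.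
rewrite monicE lead_coefDr // lead_coefXn eqxx /=.
by rewrite addrC size_polyDl // size_polyXn.
Qed.

(* q-factorials are monic, so the divisions in qmultinom are exact. *)
Lemma qfact_monic (m : nat) : qfact m \is monic.
Proof.
rewrite /qfact big_seq; apply: monic_prod => i; rewrite mem_index_iota.
by case/andP => /qint_monic /andP[].
Qed.

Lemma binGF_qfact (a b : nat) : binGF a b * (qfact b * qfact a) = qfact (b + a).
Proof.
have hall : all (fun x => x < 2)%N (binword a b).
  by rewrite /binword all_cat !all_nseq !orbT.
have := qmultinomial_coinv _ _ hall.
rewrite /binGF big_ord_recr big_ord_recr big_ord0 /= mul1r.
rewrite /binword !count_cat !count_nseq size_cat !size_nseq.
by rewrite !mul1n !mul0n addn0 add0n.
Qed.

Lemma qtrinomial_binGF (a b c : nat) :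
  qmultinom (a + b + c) [:: a; b; c] = binGF a (b + c) * binGF b c.
Proof.
rewrite /qmultinom /= addn0 addnA eqxx !big_cons big_nil mulr1.
have -> : qfact (a + b + c) =
    (binGF a (b + c) * binGF b c) * (qfact a * (qfact b * qfact c)).
  rewrite (_ : (a + b + c = b + c + a)%N); last by lia.
  rewrite -binGF_qfact (addnC b c) -binGF_qfact; ring.
by rewrite Pdiv.IdomainMonic.mulpK // !monicMl ?qfact_monic.
Qed.

Definition middle (n : nat) (alpha : nat -> nat) : seq nat :=
  flatten [seq nseq (alpha i) i | i <- iota 2 (n - 2)].

Definition letters (n : nat) (alpha : nat -> nat) (k A : nat) : seq nat :=
  nseq k n ++ nseq A 1%N ++ middle n alpha.

Lemma sumn_indicator (f : nat -> nat) (x a b : nat) :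
  sumn [seq ((i == x) * f i)%N | i <- iota a b] =
  if (a <= x < a + b)%N then f x else 0%N.
Proof.
elim: b a => [|b IH] a /=; first by case: ifP => //; lia.
rewrite IH; case: (eqVneq a x) => [->|ax] /=.
  by rewrite mul1n leqnn addnS ltnS leq_addr /=; case: ifP => //; lia.
rewrite mul0n add0n; case: ifP => h1; case: ifP => h2 //; lia.
Qed.

Lemma count_middle (n : nat) (alpha : nat -> nat) (x : nat) :
  count_mem x (middle n alpha) = if (2 <= x < n)%N then alpha x else 0%N.
Proof.
rewrite /middle count_flatten -map_comp.
rewrite (eq_map (_ : _ =1 fun i => ((i == x) * alpha i)%N)); last first.
  by move=> i /=; rewrite count_nseq.
by rewrite sumn_indicator; case: ifP; case: ifP => //; lia.
Qed.

Lemma size_middle (n : nat) (alpha : nat -> nat) :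
  size (middle n alpha) = asum n alpha.
Proof.
rewrite /middle size_flatten /shape -map_comp /asum.
rewrite (eq_map (_ : _ =1 alpha)); last by move=> i /=; rewrite size_nseq.
by rewrite sumnE big_map.
Qed.

Lemma mem_middle (n : nat) (alpha : nat -> nat) (y : nat) :
  y \in middle n alpha -> (2 <= y < n)%N.
Proof.
move=> ym; have : (0 < count_mem y (middle n alpha))%N.
  by rewrite -has_count has_pred1.
by rewrite count_middle; case: ifP.
Qed.

Lemma mem_letters (n : nat) (alpha : nat -> nat) (k A y : nat) :
  y \in letters n alpha k A -> [\/ y = n, y = 1%N | (2 <= y < n)%N].
Proof.
rewrite /letters !mem_cat !mem_nseq.
case/or3P => [/andP[_ /eqP ->]|/andP[_ /eqP ->]|/mem_middle h].
- exact: Or31.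
- exact: Or32.
- exact: Or33.
Qed.

Lemma count_letters (n : nat) (alpha : nat -> nat) (k A x : nat) :
  count_mem x (letters n alpha k A) =
  ((n == x) * k + (1 == x) * A + count_mem x (middle n alpha))%N.
Proof. by rewrite /letters !count_cat !count_nseq addnA. Qed.

Lemma letters_word (n : nat) (alpha : nat -> nat) (N k A : nat) (w : seq nat) :
  (3 <= n)%N -> (k + A + asum n alpha = N)%N ->
  perm_eq w (letters n alpha k A) ->
  (size w == N) && all (fun x => (1 <= x <= n)%N) w.
Proof.
move=> n3 hN pw.
rewrite (perm_size pw) /letters !size_cat !size_nseq size_middle addnA hN eqxx /=.
rewrite (perm_all _ pw) !all_cat !all_nseq /=; apply/and3P; split; try lia.
by apply/allP => y /mem_middle; lia.
Qed.

Lemma inW_letters (n : nat) (alpha : nat -> nat) (N L k : nat) (w : seq nat) :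
  (3 <= n)%N -> (k <= L)%N -> (L + asum n alpha = N)%N ->
  inW n alpha N L k w = perm_eq w (letters n alpha k (L - k)).
Proof.
move=> n3 kL hN; apply/idP/idP.
  case/and5P => /eqP sz ha /eqP cn /eqP c1 hal.
  apply/allP => x _; apply/eqP; rewrite count_letters count_middle.
  case: ifP => hx.
    have : x \in iota 2 (n - 2) by rewrite mem_iota; lia.
    move/allP: hal => h /h /= /eqP ->; lia.
  case: (eqVneq x n) => [->|xn]; first by rewrite cn; lia.
  case: (eqVneq x 1%N) => [->|x1]; first by rewrite c1; lia.
  suff -> : count_mem x w = 0%N by lia.
  apply/count_memPn/negP => xw; move/allP: ha => /(_ x xw) /= h.
  by move: hx; lia.
move=> pw; have hNk : (k + (L - k) + asum n alpha = N)%N by lia.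
have /andP[sz ha] := @letters_word n alpha N k (L - k) w n3 hNk pw.
rewrite /inW sz ha /= !(permP pw) !count_letters !count_middle /=.
apply/and3P; split.
- by rewrite ltnn andbF; apply/eqP; lia.
- by apply/eqP; lia.
apply/allP => i; rewrite mem_iota => hi /=.
by rewrite (permP pw) count_letters count_middle; case: ifP => h; apply/eqP; lia.
Qed.

Definition middleGF (n : nat) (alpha : nat -> nat) : {poly int} :=
  \sum_(u <- permutations (middle n alpha)) 'X^(coinv_rec u).

Lemma qmultinom_middle (n : nat) (alpha : nat -> nat) : (2 <= n)%N ->
  qmultinom (asum n alpha) (aseq n alpha) = middleGF n alpha.
Proof.
move=> n2.
have hs : sumn (aseq n alpha) = asum n alpha by rewrite /aseq sumnE big_map.
rewrite /qmultinom hs eqxx.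
have hall : all (fun x => x < n)%N (middle n alpha).
  by apply/allP => y /mem_middle; lia.
have := qmultinomial_coinv _ _ hall; rewrite size_middle => <-.
have -> : \prod_(y < n) qfact (count_mem (y : nat) (middle n alpha)) =
          \prod_(b <- aseq n alpha) qfact b.
  rewrite -(big_mkord xpredT (fun y => qfact (count_mem y (middle n alpha)))).
  rewrite big_ltn; last by lia.
  rewrite big_ltn; last by lia.
  rewrite !count_middle /= qfact0 !mul1r /aseq big_map /index_iota.
  apply: eq_big_seq => y; rewrite mem_iota => hy.
  by rewrite count_middle; case: ifP => //; lia.
rewrite Pdiv.IdomainMonic.mulpK // big_seq; apply: monic_prod => i _.
exact: qfact_monic.
Qed.

Lemma word_of_inj (n N : nat) : injective (@word_of n N).
Proof.
move=> t1 t2 /inj_map h; apply: val_inj; apply: h.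
by move=> x y [] /val_inj.
Qed.

Lemma word_of_word (n N : nat) (t : N.-tuple 'I_n) :
  (size (word_of t) == N) && all (fun x => (1 <= x <= n)%N) (word_of t).
Proof.
rewrite /word_of size_map size_tuple eqxx /=.
by apply/allP => x /mapP[y _ ->] /=; rewrite ltn_ord.
Qed.

Lemma sum_tuples_perms (n N : nat) (s : seq nat) (P Q : pred (seq nat))
    (G : seq nat -> {poly int}) : (0 < n)%N ->
  (forall w, size w = N -> all (fun x => (1 <= x <= n)%N) w ->
     P w = perm_eq w s && Q w) ->
  (forall w, perm_eq w s -> (size w == N) && all (fun x => (1 <= x <= n)%N) w) ->
  \sum_(t : N.-tuple 'I_n | P (word_of t)) G (word_of t) =
  \sum_(w <- permutations s | Q w) G w.
Proof.
move=> n0 hP hs.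
rewrite (eq_bigl (fun t => perm_eq (word_of t) s && Q (word_of t))); last first.
  by move=> t; have /andP[/eqP h1 h2] := word_of_word _ _ t; rewrite hP.
rewrite -(big_map (@word_of n N) (fun w => perm_eq w s && Q w) G).
rewrite -big_filter_cond; apply: perm_big; apply: uniq_perm.
- by rewrite filter_uniq // (map_inj_uniq (@word_of_inj n N)) index_enum_uniq.
- exact: permutations_uniq.
move=> w; rewrite mem_filter mem_permutations.
case pw: (perm_eq w s) => //=.
have /andP[/eqP sz ha] := hs w pw.
apply/mapP; pose f (y : nat) : 'I_n := insubd (Ordinal n0) y.-1.
have szf : size (map f w) == N by rewrite size_map sz.
exists (Tuple szf); first exact: mem_index_enum.
rewrite /word_of /= -map_comp; apply/esym/map_id_in => y yw /=.
move/allP: ha => /(_ y yw) /andP[h1 h2].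
rewrite val_insubd /=; case: ifP => [_|]; first by rewrite prednK.
by move=> /negbT; rewrite -leqNgt => h; lia.
Qed.

Definition nmask (n : nat) (w : seq nat) : seq nat := map (mark n 0 1) w.

Definition onemask (n : nat) (w : seq nat) : seq nat :=
  map (mark 1 1 0) (filter (fun y => y != n) w).

Lemma pn_nmask (n : nat) (w : seq nat) : pn n w = (index 1%N (nmask n w)).+1.
Proof.
rewrite /pn /index find_map; congr S; apply: eq_find => y /=.
by rewrite /mark; case: (eqVneq y n).
Qed.

Lemma p1_onemask (n : nat) (w : seq nat) :
  p1 n w = (index 0%N (rev (onemask n w))).+1.
Proof.
rewrite /p1 /onemask -map_rev /index find_map; congr S; apply: eq_find => y /=.
by rewrite /mark; case: (eqVneq y 1%N).
Qed.

(* Masks of the rearrangements of [letters n alpha k A], for n >= 3 so that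
   the letters n, 1 and the middle letters are pairwise distinct. *)
Section LettersMasks.
Variables (n : nat) (alpha : nat -> nat) (k A : nat).
Hypothesis n3 : (3 <= n)%N.
Local Notation lett := (letters n alpha k A).

Lemma filter_letters_n :
  filter (fun y => y != n) lett = nseq A 1%N ++ middle n alpha.
Proof.
rewrite /letters !filter_cat filter_nseq eqxx /= filter_nseq.
have -> : (1%N != n) by apply/eqP; lia.
rewrite /= mul1n; congr (_ ++ _).
by apply/all_filterP/allP => y /mem_middle; lia.
Qed.

Lemma filter_letters_1 :
  filter (fun y => y != 1%N) (nseq A 1%N ++ middle n alpha) = middle n alpha.
Proof.
rewrite filter_cat filter_nseq eqxx /=.
by apply/all_filterP/allP => y /mem_middle h; apply/eqP; lia.
Qed.

Lemma map_cst_in (f : nat -> nat) (c : nat) (s : seq nat) :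
  (forall y, y \in s -> f y = c) -> map f s = nseq (size s) c.
Proof.
elim: s => //= y s IH h; rewrite h ?inE ?eqxx // IH //.
by move=> z zs; apply: h; rewrite inE zs orbT.
Qed.

Lemma nmask_letters :
  perm_eq (map (mark n 0 1) lett) (binword k (A + asum n alpha)).
Proof.
rewrite /letters !map_cat !map_nseq /mark eqxx.
have -> : (1%N == n) = false by apply/eqP; lia.
rewrite (@map_cst_in _ 0%N); last by move=> y /mem_middle h; case: ifP => // /eqP; lia.
by rewrite /binword size_middle nseqD perm_catC.
Qed.

Lemma onemask_letters :
  perm_eq (map (mark 1 1 0) (nseq A 1%N ++ middle n alpha)) (binword (asum n alpha) A).
Proof.
rewrite map_cat map_nseq /mark eqxx.
rewrite (@map_cst_in _ 1%N); last by move=> y /mem_middle h; case: ifP => // /eqP; lia.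
by rewrite size_middle.
Qed.

Lemma coinv_letters (w : seq nat) : perm_eq w lett ->
  coinv_rec w = (coinv_rec (nmask n w) + coinv_rec (onemask n w) +
    coinv_rec (filter (fun y => y != 1%N) (filter (fun y => y != n) w)))%N.
Proof.
move=> pw.
have hw y : y \in w -> y != n -> (y < n)%N = (0 < 1)%N.
  by rewrite (perm_mem pw) => /mem_letters [->|->|h]; rewrite ?eqxx //; lia.
have hv y : y \in filter (fun y => y != n) w -> y != 1%N -> (y < 1)%N = (1 < 0)%N.
  by rewrite mem_filter (perm_mem pw) => /andP[_ /mem_letters [->|->|h]];
    rewrite ?eqxx //; lia.
by rewrite (@coinv_rec_split n 0 1 w isT hw) (@coinv_rec_split 1 1 0 _ isT hv) addnA.
Qed.

Lemma sum_letters_factor (c1 c2 : pred (seq nat)) :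
  \sum_(w <- permutations lett | c1 (nmask n w) && c2 (onemask n w))
     'X^(coinv_rec w)
  = (\sum_(m <- permutations (binword k (A + asum n alpha)) | c1 m) 'X^(coinv_rec m)) *
    (\sum_(m <- permutations (binword (asum n alpha) A) | c2 m) 'X^(coinv_rec m)) *
    middleGF n alpha.
Proof.
pose f1 (m : seq nat) : {poly int} := if c1 m then 'X^(coinv_rec m) else 0.
pose g1 (m : seq nat) : {poly int} := if c2 m then 'X^(coinv_rec m) else 0.
pose f2 (v : seq nat) : {poly int} :=
  g1 (map (mark 1 1 0) v) * 'X^(coinv_rec (filter (fun y => y != 1%N) v)).
rewrite big_mkcond (eq_big_seq (fun w => f1 (nmask n w) *
                                         f2 (filter (fun y => y != n) w))); last first.
  move=> w; rewrite mem_permutations => /coinv_letters ->.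
  rewrite /f1 /f2 /g1 -/(onemask n w) !exprD.
  by case: (c1 _); case: (c2 _); rewrite /= ?mul0r ?mulr0 ?mulrA.
rewrite (@sum_perms_split n 0 1 isT _ _ (fun m v => f1 m * f2 v)).
under eq_bigr => m _ do rewrite -mulr_sumr.
rewrite -mulr_suml -mulrA; congr (_ * _).
  by rewrite [RHS]big_mkcond; apply: sum_perms_eq; exact: nmask_letters.
rewrite filter_letters_n /f2.
rewrite (@sum_perms_split 1 1 0 isT _ _ (fun m u => g1 m * 'X^(coinv_rec u))).
under eq_bigr => m _ do rewrite -mulr_sumr.
rewrite -mulr_suml filter_letters_1; congr (_ * _).
by rewrite [RHS]big_mkcond; apply: sum_perms_eq; exact: onemask_letters.
Qed.


Lemma index_nmask_k0 (w : seq nat) : perm_eq w lett -> k = 0%N ->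
  index 1%N (nmask n w) = size w.
Proof.
move=> pw k0; rewrite /nmask memNindex ?size_map //.
apply/mapP => -[y yw]; rewrite /mark; case: eqP => // yn _.
move: yw; rewrite yn (perm_mem pw) /letters k0 /= mem_cat mem_nseq.
case/orP => [/andP[_ /eqP]|/mem_middle]; lia.
Qed.

Lemma index_onemask_A0 (w : seq nat) : perm_eq w lett -> A = 0%N ->
  index 0%N (rev (onemask n w)) = asum n alpha.
Proof.
move=> pw A0.
have pm : perm_eq (onemask n w) (map (mark 1 1 0) (middle n alpha)).
  by have := perm_map (mark 1 1 0) (perm_filter (fun y => y != n) pw);
    rewrite filter_letters_n A0.
rewrite memNindex; last first.
  rewrite mem_rev (perm_mem pm); apply/mapP => -[y /mem_middle h].
  by rewrite /mark; case: eqP => [/eqP|]; lia.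
by rewrite size_rev (perm_size pm) size_map size_middle.
Qed.

End LettersMasks.

Lemma sum_Wk_factor (n : nat) (alpha : nat -> nat) (N L l k : nat)
    (P c1 c2 : pred (seq nat)) :
  (3 <= n)%N -> (k <= L)%N -> (L + asum n alpha = N)%N ->
  (forall w, perm_eq w (letters n alpha k (L - k)) ->
     P w = c1 (nmask n w) && c2 (onemask n w)) ->
  \sum_(t : N.-tuple 'I_n | inW n alpha N L k (word_of t) && P (word_of t))
     'X^(quinv' n l alpha k (word_of t))
  = 'X^(binsum n l alpha + 'C(k, 2)) *
    ((\sum_(m <- permutations (binword k (L - k + asum n alpha)) | c1 m)
        'X^(coinv_rec m)) *
     (\sum_(m <- permutations (binword (asum n alpha) (L - k)) | c2 m)
        'X^(coinv_rec m)) *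
     middleGF n alpha).
Proof.
move=> n3 kL hN hP.
have n0 : (0 < n)%N by lia.
have hsel w : size w = N -> all (fun x => (1 <= x <= n)%N) w ->
    inW n alpha N L k w && P w =
    perm_eq w (letters n alpha k (L - k)) && (c1 (nmask n w) && c2 (onemask n w)).
  move=> _ _; rewrite (@inW_letters n alpha N L k w n3 kL hN).
  by case pw: (perm_eq _ _) => //=; exact: hP.
have hword w : perm_eq w (letters n alpha k (L - k)) ->
    (size w == N) && all (fun x => (1 <= x <= n)%N) w.
  by apply: letters_word n3 _; lia.
rewrite (@sum_tuples_perms n N _ _ _ (fun w => 'X^(quinv' n l alpha k w)) n0 hsel hword).
rewrite (eq_bigr (fun w => 'X^(binsum n l alpha + 'C(k, 2)) * 'X^(coinv_rec w))).
  by rewrite -mulr_sumr (@sum_letters_factor n alpha k (L - k) n3).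
by move=> w _; rewrite /quinv' coinvE -exprD; congr 'X^_; lia.
Qed.

Lemma sum_Wgt_p1 (n : nat) (alpha : nat -> nat) (N L l k i : nat) :
  (3 <= n)%N -> (0 < L)%N -> (L + asum n alpha = N)%N ->
  (k <= L - 1)%N -> (1 <= i <= N - L + 1)%N ->
  \sum_(t : N.-tuple 'I_n | Wgt n alpha N L k (word_of t) && (p1 n (word_of t) == i))
     'X^(quinv' n l alpha k (word_of t))
  = 'X^(binsum n l alpha + 'C(k.+1, 2) + (i - 1) * L)
    * qmultinom (N - L) (aseq n alpha)
    * qmultinom (N - i) [:: k; (N - L + 1 - i)%N; (L - k - 1)%N].
Proof.
move=> n3 L0 hN hk; case: i => [|i] hi; first by lia.
have kL : (k <= L)%N by lia.
under eq_bigl => t do rewrite /Wgt -andbA.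
rewrite (@sum_Wk_factor n alpha N L l k
    (fun w => ((k == 0) || ((k != L) && (p1 n w < pn n w))) && (p1 n w == i.+1))%N
    (fun m => i < index 1%N m)%N
           (fun m => index 0%N (rev m) == i) n3 kL hN); last first.
  move=> w pw; rewrite pn_nmask p1_onemask.
  have [k0|kpos] := posnP k.
    rewrite (@index_nmask_k0 n alpha k (L - k) n3 w pw k0) (perm_size pw).
    by rewrite /letters !size_cat !size_nseq size_middle; apply/idP/idP; lia.
  set a := index _ _; set b := index _ _; apply/idP/idP; lia.
rewrite binGF_first1_ge; last by lia.
rewrite binGF_last0_eq; [|lia|lia].
rewrite (_ : (N - L = asum n alpha)%N); last by lia.
rewrite qmultinom_middle; last by lia.
rewrite (_ : (N - i.+1 = k + (asum n alpha - i) + (L - k - 1))%N); last by lia.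
rewrite (_ : (asum n alpha + 1 - i.+1 = asum n alpha - i)%N); last by lia.
rewrite qtrinomial_binGF.
rewrite (_ : (L - k + asum n alpha - i.+1 = asum n alpha - i + (L - k - 1))%N); last by lia.
rewrite (_ : ((L - k).-1 = L - k - 1)%N); last by lia.
rewrite (_ : (binsum n l alpha + 'C(k.+1, 2) + (i.+1 - 1) * L =
              i.+1 * k + i * (L - k) + (binsum n l alpha + 'C(k, 2)))%N); last first.
  by rewrite binS bin1; nia.
by rewrite !exprD; ring.
Qed.

Lemma sum_Wle_pn (n : nat) (alpha : nat -> nat) (N L l k j : nat) :
  (3 <= n)%N -> (L + asum n alpha = N)%N ->
  (1 <= k <= L)%N -> (1 <= j <= N - L + 1)%N ->
  \sum_(t : N.-tuple 'I_n | Wle n alpha N L k (word_of t) && (pn n (word_of t) == j))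
     'X^(quinv' n l alpha k (word_of t))
  = 'X^(binsum n l alpha + 'C(k, 2) + (j - 1) * L)
    * qmultinom (N - L) (aseq n alpha)
    * qmultinom (N - j) [:: (k - 1)%N; (N - L + 1 - j)%N; (L - k)%N].
Proof.
move=> n3 hN /andP[k1 kL]; case: j => [|j] hj; first by lia.
under eq_bigl => t do rewrite /Wle -andbA.
rewrite (@sum_Wk_factor n alpha N L l k
    (fun w => ((k == L) || ((k != 0) && (pn n w <= p1 n w))) && (pn n w == j.+1))%N
    (fun m => index 1%N m == j) (fun m => j <= index 0%N (rev m))%N n3 kL hN);
  last first.
  move=> w pw; rewrite pn_nmask p1_onemask.
  have [A0|Apos] := eqVneq (L - k)%N 0%N.
    by rewrite (@index_onemask_A0 n alpha k (L - k) n3 w pw A0); apply/idP/idP; lia.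
  set a := index _ _; set b := index _ _; apply/idP/idP; lia.
rewrite binGF_first1_eq; [|lia|lia].
rewrite binGF_last0_ge; last by lia.
rewrite (_ : (N - L = asum n alpha)%N); last by lia.
rewrite qmultinom_middle; last by lia.
rewrite (_ : (N - j.+1 = (k - 1) + (asum n alpha - j) + (L - k))%N); last by lia.
rewrite (_ : (asum n alpha + 1 - j.+1 = asum n alpha - j)%N); last by lia.
rewrite qtrinomial_binGF.
rewrite (_ : (L - k + asum n alpha - j = asum n alpha - j + (L - k))%N); last by lia.
rewrite (_ : (k.-1 = k - 1)%N); last by lia.
rewrite (_ : (binsum n l alpha + 'C(k, 2) + (j.+1 - 1) * L =
              j * k + j * (L - k) + (binsum n l alpha + 'C(k, 2)))%N); last by nia.
by rewrite !exprD; ring.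
Qed.

Theorem mainTheorem18 (n : nat) (alpha : nat -> nat) (N l : nat) :
  (3 <= n)%N ->
  (forall i, (2 <= i <= n - 1)%N -> (0 < alpha i)%N) ->
  (asum n alpha < N)%N ->
  (2 <= l <= n)%N ->
  let L := (N - asum n alpha)%N in
  (forall k i, (k <= L - 1)%N -> (1 <= i <= N - L + 1)%N ->
     \sum_(t : N.-tuple 'I_n |
             Wgt n alpha N L k (word_of t) && (p1 n (word_of t) == i))
        'X^(quinv' n l alpha k (word_of t))
     = 'X^(binsum n l alpha + 'C(k.+1, 2) + (i - 1) * L)
       * qmultinom (N - L) (aseq n alpha)
       * qmultinom (N - i) [:: k; (N - L + 1 - i)%N; (L - k - 1)%N])
  /\
  (forall k j, (1 <= k <= L)%N -> (1 <= j <= N - L + 1)%N ->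
     \sum_(t : N.-tuple 'I_n |
             Wle n alpha N L k (word_of t) && (pn n (word_of t) == j))
        'X^(quinv' n l alpha k (word_of t))
     = 'X^(binsum n l alpha + 'C(k, 2) + (j - 1) * L)
       * qmultinom (N - L) (aseq n alpha)
       * qmultinom (N - j) [:: (k - 1)%N; (N - L + 1 - j)%N; (L - k)%N]).
Proof.
move=> n3 _ hN _ L.
have L0 : (0 < L)%N by rewrite /L; lia.
have hLN : (L + asum n alpha = N)%N by rewrite /L; lia.
split=> [k i | k j].
- exact: sum_Wgt_p1.
- exact: sum_Wle_pn.
Qed.
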